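(* In the setting of the simple-region decomposition (split $\Gamma$ at the $y$-portals $\operatorname{portal}_y(v_{WNW}(H))$, $\operatorname{portal}_y(v_{ESE}(H))$ and at the nodes $v_{WNW}(H)$, $v_{ESE}(H)$ for every inner hole $H\in\mathcal H$), the number of gates, i.e. of nonempty sets of the form $R\cap P$ where $R$ is (the node set of) a resulting region and $P$ is one of the splitting portals, is at most $6|\mathcal H|$.
   Context: $G_\Delta$ is the infinite regular triangular grid graph (neighbour directions E, W, NNE, SSW, NNW, SSE; $y$-axis = NNE–SSW; WNW/ESE perpendicular to it). $\Gamma=(V,E)$ is a triangular grid graph (connected subgraph of $G_\Delta$ induced by a finite $V$) and $\mathcal H$ its set of inner holes (bounded connected components of the subgraph of $G_\Delta$ induced by $V_\Delta\setminus V$). The boundary of a hole $H$ is the set of nodes of $V$ adjacent to a node of $H$; $v_{WNW}(H)$ ($v_{ESE}(H)$) is the boundary node of $H$ extremal in direction WNW (ESE), ties broken NNE-most. A $y$-portal is a connected component of $(V,E_y)$ with $E_y$ the edges parallel to the $y$-axis. Splitting at a $y$-portal $P$ replaces each $p\in P$ by copies $p_W$ (adjacent to the $W$-copies of its neighbours on $P$ and to $p$'s neighbours in directions NNW, W) and $p_E$ (adjacent to the $E$-copies of its neighbours on $P$ and to $p$'s neighbours in directions SSE, E). Splitting at $v_{WNW}(H)$ (whose adjacent hole point lies in direction E or SSE) replaces $v_E$ by $v_E^N$ (neighbours of $v_E$ in directions NNE, E) and $v_E^S$ (neighbours of $v_E$ in directions SSW, SSE); splitting at $v_{ESE}(H)$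 (adjacent hole point in direction W or NNW) replaces $v_W$ by $v_W^S$ (neighbours in directions SSW, W) and $v_W^N$ (neighbours in directions NNE, NNW). The resulting regions are the grid-point sets underlying the connected components of the split graph. *)

From HB Require Import structures.
From mathcomp Require Import all_boot all_order all_algebra.
From mathcomp Require Import finmap.

Set Implicit Arguments.
Unset Strict Implicit.
Unset Printing Implicit Defensive.

Import Order.TTheory GRing.Theory Num.Theory.
Local Open Scope ring_scope.
Local Open Scope fset_scope.
Local Open Scope ring_scope.

(* Coordinates: a point (a,b) sits at a*E + b*NNE (unit vectors E, NNE). *)
Definition point := (int * int)%type.

Inductive dir := dE | dW | dNNE | dSSW | dNNW | dSSE.

Definition dvec (d : dir) : int * int :=
  match d with
  | dE => (1, 0) | dW => (-1, 0)
  | dNNE => (0, 1) | dSSW => (0, -1)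
  | dNNW => (-1, 1) | dSSE => (1, -1)
  end.

Definition opp_dir (d : dir) : dir :=
  match d with
  | dE => dW | dW => dE | dNNE => dSSW | dSSW => dNNE | dNNW => dSSE | dSSE => dNNW
  end.

Definition is_vertical (d : dir) : bool :=
  match d with dNNE | dSSW => true | _ => false end.

Definition nb (p : point) (d : dir) : point :=
  ((fst p) + (dvec d).1, (snd p) + (dvec d).2).

Definition adj (p q : point) : Prop := exists d, q = nb p d.
(* adjacency along an edge parallel to the y-axis (NNE--SSW) *)
Definition vadj (p q : point) : Prop := q = nb p dNNE \/ q = nb p dSSW.

Inductive reach {T : Type} (A : T -> Prop) (r : T -> T -> Prop) (x : T) : T -> Prop :=
  | reach_refl : A x -> reach A r x x
  | reach_step y z : reach A r x y -> r y z -> A z -> reach A r x z.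

Definition grid_connected (V : {fset point}) : Prop :=
  forall p q, p \in V -> q \in V -> reach (fun x => x \in V) adj p q.

(* H is an inner hole: a bounded (= finite) connected component of the
   subgraph of G_Delta induced by the complement of V *)
Definition is_hole (V H : {fset point}) : Prop :=
  [/\ H != fset0,
      (forall h, h \in H -> h \notin V),
      (forall h q, h \in H -> adj h q -> q \notin V -> q \in H) &
      (forall h h', h \in H -> h' \in H -> reach (fun x => x \in H) adj h h')].

Definition boundary (V H : {fset point}) (v : point) : Prop :=
  v \in V /\ exists2 h, h \in H & adj v h.

(* Extremal in direction WNW = minimal first coordinate (WNW is perpendicular
   to the y-axis); ties broken NNE-most = maximal second coordinate. *)
Definition is_vWNW (V H : {fset point}) (v : point) : Prop :=
  boundary V H v /\
  forall u, boundary V H u -> (fst v) < (fst u) \/ ((fst v) = (fst u) /\ (snd u) <= (snd v)).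

(* Extremal in direction ESE = maximal first coordinate; ties NNE-most. *)
Definition is_vESE (V H : {fset point}) (v : point) : Prop :=
  boundary V H v /\
  forall u, boundary V H u -> (fst u) < (fst v) \/ ((fst v) = (fst u) /\ (snd u) <= (snd v)).

(* p lies on the y-portal of v (component of v in (V, E_y)) *)
Definition portal (V : {fset point}) (v p : point) : Prop :=
  reach (fun x => x \in V) vadj v p.

Definition split_root (V : {fset point}) (Hs : {fset {fset point}}) (v : point) : Prop :=
  exists2 H, H \in Hs & (is_vWNW V H v \/ is_vESE V H v).

Definition in_split_portal V Hs (p : point) : Prop :=
  exists v, split_root V Hs v /\ portal V v p.

Definition is_WNW_node V (Hs : {fset {fset point}}) (p : point) : Prop :=
  exists2 H, H \in Hs & is_vWNW V H p.
Definition is_ESE_node V (Hs : {fset {fset point}}) (p : point) : Prop :=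
  exists2 H, H \in Hs & is_vESE V H p.

(* copies of a node in the split graph:
   Whole = unsplit node; TW/TE = p_W / p_E;
   TEN/TES = v_E^N / v_E^S; TWS/TWN = v_W^S / v_W^N *)
Inductive tag := Whole | TW | TE | TEN | TES | TWS | TWN.

(* directions in which a copy keeps the incident edges of the original node *)
Definition owns (t : tag) (d : dir) : bool :=
  match t, d with
  | Whole, _ => true
  | TW, (dNNE | dSSW | dNNW | dW) => true
  | TE, (dNNE | dSSW | dSSE | dE) => true
  | TEN, (dNNE | dE) => true
  | TES, (dSSW | dSSE) => true
  | TWS, (dSSW | dW) => true
  | TWN, (dNNE | dNNW) => true
  | _, _ => false
  end.

(* side of a copy: portal edges connect W-copies to W-copies and
   E-copies to E-copies *)
Definition side (t : tag) : nat :=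
  match t with
  | Whole => 0 | TW | TWS | TWN => 1 | TE | TEN | TES => 2
  end%N.

Definition valid_copy V Hs (c : point * tag) : Prop :=
  (fst c) \in V /\
  match (snd c) with
  | Whole => ~ in_split_portal V Hs (fst c)
  | TW => in_split_portal V Hs (fst c) /\ ~ is_ESE_node V Hs (fst c)
  | TWS | TWN => in_split_portal V Hs (fst c) /\ is_ESE_node V Hs (fst c)
  | TE => in_split_portal V Hs (fst c) /\ ~ is_WNW_node V Hs (fst c)
  | TEN | TES => in_split_portal V Hs (fst c) /\ is_WNW_node V Hs (fst c)
  end.

Definition split_edge V Hs (c c' : point * tag) : Prop :=
  valid_copy V Hs c /\ valid_copy V Hs c' /\
  exists d, [/\ (fst c') = nb (fst c) d, owns (snd c) d, owns (snd c') (opp_dir d) &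
                (is_vertical d -> side (snd c) = side (snd c'))].

(* grid points underlying the connected component (region) of copy c0 *)
Definition region_of V Hs (c0 : point * tag) (p : point) : Prop :=
  exists t, reach (valid_copy V Hs) (split_edge V Hs) c0 (p, t).

Definition is_gate V Hs (g : {fset point}) : Prop :=
  exists c0 v,
    [/\ valid_copy V Hs c0, split_root V Hs v, g != fset0 &
        forall p, p \in g <-> (region_of V Hs c0 p /\ portal V v p)].

(* Every gate has a topmost copy in the split graph: climbing NNE along the
   portal inside the region must stop, and it can only stop at the top node of
   a split portal (at its W- or E-copy) or at a copy whose NNE edge was cut by
   the node split, i.e. v_E^S of v_WNW(H) or v_W^S of v_ESE(H).  Such a copy
   determines both its region and its portal, hence the gate, and there are at
   most 2 * 2 + 2 = 6 candidates per hole. *)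
From Pilot Require Import Defs.
From HB Require Import structures.
From mathcomp Require Import all_boot all_order all_algebra.
From mathcomp Require Import finmap zify.
From Stdlib Require Import ClassicalEpsilon.
Local Open Scope fset_scope.
Local Open Scope ring_scope.
Import Order.TTheory GRing.Theory Num.Theory.
Set Implicit Arguments.
Unset Strict Implicit.

Section Reach.

Variables (T : Type) (A : T -> Prop) (r : T -> T -> Prop).

Lemma reach_trans x y z : reach A r x y -> reach A r y z -> reach A r x z.
Proof. by move=> rxy; elim=> // y' z' _ rxy' ryz Az; apply: reach_step ryz Az. Qed.

Lemma reach_ends x y : reach A r x y -> A x /\ A y.
Proof. by elim=> [Ax | y' z _ [Ax _] _ Az]. Qed.

Lemma reach_sym x y : (forall a b, r a b -> r b a) -> reach A r x y -> reach A r y x.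
Proof.
move=> r_sym; elim=> [Ax | y' z rxy' ryx ry'z Az]; first exact: reach_refl.
apply: reach_trans _ ryx.
exact: reach_step (reach_refl r Az) (r_sym _ _ ry'z) (reach_ends rxy').2.
Qed.

Lemma reach_sub (r' : T -> T -> Prop) x y :
  (forall a b, r a b -> r' a b) -> reach A r x y -> reach A r' x y.
Proof.
move=> rr'; elim=> [Ax | y' z _ rxy' ry'z Az]; first exact: reach_refl.
exact: reach_step rxy' (rr' _ _ ry'z) Az.
Qed.

End Reach.

Lemma point_eq (p q : point) : p.1 = q.1 -> p.2 = q.2 -> p = q.
Proof. by case: p q => ? ? [? ?] /= -> ->. Qed.

Lemma nb_opp_dir p d : nb (nb p d) (opp_dir d) = p.
Proof. by case: p => a b; case: d; apply: point_eq; rewrite /nb /=; lia. Qed.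

Lemma vadj_sym p q : vadj p q -> vadj q p.
Proof.
by case=> ->; [right; exact: esym (nb_opp_dir p dNNE) | left; exact: esym (nb_opp_dir p dSSW)].
Qed.

Lemma fset_snd_bounded (V : {fset point}) : exists M : int, forall z : point, z \in V -> z.2 <= M.
Proof.
exists (\max_(z <- V) `|(z : point).2|%N)%:Z => -[a b] zV.
have := @leq_bigmax_seq _ (V : seq point) xpredT (fun z : point => `|z.2|%N) _ zV erefl.
by rewrite /=; lia.
Qed.

Section Portals.

Variable V : {fset point}.

Lemma portal_trans v v' x y :
  portal V v x -> portal V v' x -> portal V v y -> portal V v' y.
Proof.
move=> pvx pv'x pvy; apply: reach_trans pv'x _.
exact: reach_trans (reach_sym vadj_sym pvx) pvy.
Qed.

Lemma portal_below_top (q p : point) :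
  nb q dNNE \notin V -> portal V q p -> p.1 = q.1 /\ p.2 <= q.2.
Proof.
move=> q_top qp; change (@reach point (fun x => x \in V) vadj q p) in qp.
elim: qp => [_ | y z _ [y1 y2] [-> | ->] zV]; rewrite /nb /=.
- by [].
- have y_lt : y.2 < q.2.
    rewrite lt_neqAle y2 andbT; apply: contraNneq q_top => yq.
    by rewrite -(_ : nb y dNNE = nb q dNNE) // /nb y1 yq.
  lia.
- lia.
Qed.

Lemma portal_top_uniq v q q' :
  portal V v q -> nb q dNNE \notin V -> portal V v q' -> nb q' dNNE \notin V -> q = q'.
Proof.
move=> pq q_top pq' q'_top.
have rqq' := reach_trans (reach_sym vadj_sym pq) pq'.
have [] := portal_below_top q_top rqq'.
have [] := portal_below_top q'_top (reach_sym vadj_sym rqq').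
by move=> ? ? ? ?; apply: point_eq; lia.
Qed.

Lemma vWNW_uniq H v v' : is_vWNW V H v -> is_vWNW V H v' -> v = v'.
Proof. by case=> bv hv [bv' hv']; move: (hv _ bv') (hv' _ bv) => ? ?; apply: point_eq; lia. Qed.

Lemma vESE_uniq H v v' : is_vESE V H v -> is_vESE V H v' -> v = v'.
Proof. by case=> bv hv [bv' hv']; move: (hv _ bv') (hv' _ bv) => ? ?; apply: point_eq; lia. Qed.

Definition some_point : inhabited point := inhabits (0, 0).

Definition hole_WNW H : point := epsilon some_point (is_vWNW V H).
Definition hole_ESE H : point := epsilon some_point (is_vESE V H).
Definition portal_top v : point :=
  epsilon some_point (fun q => portal V v q /\ nb q dNNE \notin V).

Lemma hole_WNWE H v : is_vWNW V H v -> hole_WNW H = v.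
Proof. by move=> hv; apply: vWNW_uniq (epsilon_spec _ _ (ex_intro _ v hv)) hv. Qed.

Lemma hole_ESEE H v : is_vESE V H v -> hole_ESE H = v.
Proof. by move=> hv; apply: vESE_uniq (epsilon_spec _ _ (ex_intro _ v hv)) hv. Qed.

Lemma portal_topE v q : portal V v q -> nb q dNNE \notin V -> portal_top v = q.
Proof.
move=> pq q_top.
have [] := epsilon_spec some_point (fun q => portal V v q /\ nb q dNNE \notin V)
  (ex_intro _ q (conj pq q_top)).
by move=> ptop ptop_top; apply: portal_top_uniq ptop ptop_top pq q_top.
Qed.

End Portals.

Section SplitGraph.

Variables (V : {fset point}) (Hs : {fset {fset point}}).

Local Notation valid := (valid_copy V Hs).
Local Notation sreach := (reach valid (split_edge V Hs)).

Lemma split_edge_sym c c' : split_edge V Hs c c' -> split_edge V Hs c' c.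
Proof.
case=> vc [vc' [d [e own own' vert]]]; do 2!split=> //.
exists (opp_dir d); split; first by rewrite e nb_opp_dir.
- exact: own'.
- by case: d {e own' vert} own.
- by move=> vert_opp; rewrite vert //; case: d {e own own' vert} vert_opp.
Qed.

Lemma region_of_connected c0 c0' p :
  sreach c0 c0' -> region_of V Hs c0' p -> region_of V Hs c0 p.
Proof. by move=> r [t r']; exists t; apply: reach_trans r r'. Qed.

(* Injective on valid copies, since TW/TWN and TE/TEN never both exist. *)
Definition copy_key (c : point * Defs.tag) : point * (nat * bool) :=
  (c.1, (side c.2, owns c.2 dNNE)).

Lemma copy_key_inj c c' : valid c -> valid c' -> copy_key c = copy_key c' -> c = c'.
Proof.
case: c c' => p t [p' t'] [_ vt] [_ vt'] [ep e_side e_own]; subst p'.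
by case: t t' vt vt' e_side e_own => [] [] //= [_ ?] [_ ?]; tauto.
Qed.

Lemma split_copy_exists p s : p \in V -> in_split_portal V Hs p -> (0 < s <= 2)%N ->
  exists t, [/\ valid (p, t), owns t dSSW & side t = s].
Proof.
move=> pV sp; case: s => [|[|[|s]]] //= _.
- by case: (classic (is_ESE_node V Hs p)) => hE; [exists TWS | exists TW].
- by case: (classic (is_WNW_node V Hs p)) => hW; [exists TES | exists TE].
Qed.

Definition split_up c c' := split_edge V Hs c c' /\ c'.1 = nb c.1 dNNE.

Definition up_blocked c := ~ exists c', split_up c c'.

Lemma up_reach_portal v c x : reach valid split_up c x -> portal V v c.1 -> portal V v x.1.
Proof.
elim=> // y z _ IH [[_ [[zV _] _]] zy] _ /IH pvy.
by apply: reach_step pvy _ zV; left.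
Qed.

Lemma up_blocked_exists c : valid c -> exists2 x, reach valid split_up c x & up_blocked x.
Proof.
have [M leM] := fset_snd_bounded V.
suff: forall n c, valid c -> M < c.1.2 + n%:Z -> exists2 x, reach valid split_up c x & up_blocked x.
  by move=> climb vc; apply: (climb `|M - c.1.2|.+1 c vc); lia.
elim=> [|n IH] {}c vc ltM; first by have := leM _ vc.1; lia.
case: (classic (exists c', split_up c c')) => [[c' upc] | blocked]; last first.
  by exists c => //; apply: reach_refl.
have vc' := upc.1.2.1.
have [|x rx bx] := IH c' vc'; first by have := leM _ vc'.1; rewrite upc.2 /nb /=; lia.
by exists x => //; apply: reach_trans rx; apply: reach_step (reach_refl _ vc) upc vc'.
Qed.

Lemma up_blocked_cases v q t : split_root V Hs v -> portal V v q -> valid (q, t) ->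
  up_blocked (q, t) ->
  [\/ t = TES /\ is_WNW_node V Hs q, t = TWS /\ is_ESE_node V Hs q |
      [/\ nb q dNNE \notin V, owns t dNNE & (0 < side t <= 2)%N]].
Proof.
move=> rv pq [/= qV vt] blocked; have sq : in_split_portal V Hs q by exists v.
have q_top : owns t dNNE -> (0 < side t <= 2)%N -> nb q dNNE \notin V.
  move=> own s12; apply/negP => uV.
  have su : in_split_portal V Hs (nb q dNNE).
    by exists v; split=> //; apply: reach_step pq _ uV; left.
  have [t' [vt' own' st']] := split_copy_exists uV su s12.
  apply: blocked; exists (nb q dNNE, t'); split=> //; do 2!split=> //.
  by exists dNNE; split.
case: t vt q_top {blocked} => /= [vt | _ | _ | [_ ?] | [_ ?] | [_ ?] | _] q_top.
- by case: vt.
- by apply: Or33; split=> //; apply: q_top.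
- by apply: Or33; split=> //; apply: q_top.
- by apply: Or33; split=> //; apply: q_top.
- exact: Or31.
- exact: Or32.
- by apply: Or33; split=> //; apply: q_top.
Qed.

Lemma up_reach_split c x : reach valid split_up c x -> sreach c x.
Proof. exact: reach_sub (fun a b (up : split_up a b) => up.1). Qed.

Definition gate_data c0 v (g : {fset point}) :=
  [/\ valid c0, split_root V Hs v &
      forall p, p \in g <-> region_of V Hs c0 p /\ portal V v p].

Definition gate_top g x :=
  exists c0 v, [/\ gate_data c0 v g, sreach c0 x, portal V v x.1 & up_blocked x].

Lemma gate_top_exists g : is_gate V Hs g -> exists x, gate_top g x.
Proof.
case=> c0 [v [vc0 rv /fset0Pn [p pg] gP]].
have [[t rt] pvp] := (gP p).1 pg.
have [x rx bx] := up_blocked_exists (reach_ends rt).2.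
exists x, c0, v; split=> //.
- exact: reach_trans rt (up_reach_split rx).
- exact: up_reach_portal rx pvp.
Qed.

Lemma gate_data_sub c0 v c0' v' g g' x :
  gate_data c0 v g -> gate_data c0' v' g' -> sreach c0 x -> sreach c0' x ->
  portal V v x.1 -> portal V v' x.1 -> {subset g <= g'}.
Proof.
move=> [_ _ gP] [_ _ gP'] r r' px px' p /gP [reg pvp]; apply/gP'; split.
- exact: region_of_connected (reach_trans r' (reach_sym split_edge_sym r)) reg.
- exact: portal_trans px px' pvp.
Qed.

Lemma gate_top_inj g g' x : gate_top g x -> gate_top g' x -> g = g'.
Proof.
move=> [c0 [v [gd r px _]]] [c0' [v' [gd' r' px' _]]].
apply/fsetP => p; apply/idP/idP.
- exact: gate_data_sub gd gd' r r' px px' p.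
- exact: gate_data_sub gd' gd r' r px' px p.
Qed.

Definition hole_keys H : seq (point * (nat * bool)) :=
  [:: (hole_WNW V H, (2, false)); (hole_ESE V H, (1, false));
      (portal_top V (hole_WNW V H), (1, true)); (portal_top V (hole_WNW V H), (2, true));
      (portal_top V (hole_ESE V H), (1, true)); (portal_top V (hole_ESE V H), (2, true))]%N.

Definition gate_keys := flatten [seq hole_keys H | H <- Hs].

Lemma size_gate_keys : size gate_keys = (6 * #|` Hs|)%N.
Proof.
rewrite size_flatten /shape -map_comp /=.
by elim: (Hs : seq _) => //= H s ->; rewrite mulnS.
Qed.

Lemma hole_keys_sub H y : H \in Hs -> y \in hole_keys H -> y \in gate_keys.
Proof. by move=> HHs yH; apply/flattenP; exists (hole_keys H) => //; apply: map_f. Qed.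

Lemma gate_top_key g x : gate_top g x -> copy_key x \in gate_keys.
Proof.
move: x => [q t] [c0 [v [[_ rv _] rx pq blocked]]].
have vqt := (reach_ends rx).2.
case: (up_blocked_cases rv pq vqt blocked) => [[-> [H HHs hW]] | [-> [H HHs hE]] |].
- by apply: (hole_keys_sub HHs); rewrite /hole_keys (hole_WNWE hW) !inE eqxx.
- by apply: (hole_keys_sub HHs); rewrite /hole_keys (hole_ESEE hE) !inE eqxx ?orbT.
move=> [q_top own s12]; rewrite /copy_key /= own.
have top_q := portal_topE pq q_top.
case: rv => H HHs [hW | hE]; apply: (hole_keys_sub HHs); rewrite /hole_keys.
- rewrite (hole_WNWE hW) top_q.
  by case: (side t) s12 => [|[|[|]]] //= _; rewrite !inE eqxx ?orbT.
- rewrite (hole_ESEE hE) top_q.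
  by case: (side t) s12 => [|[|[|]]] //= _; rewrite !inE eqxx ?orbT.
Qed.

End SplitGraph.

Definition some_copy : inhabited (point * Defs.tag) := inhabits ((0, 0), Whole).

Theorem mainTheorem6 (V : {fset point}) (Hs Gs : {fset {fset point}}) :
  grid_connected V ->
  (forall H, H \in Hs <-> is_hole V H) ->
  (forall g, g \in Gs <-> is_gate V Hs g) ->
  (#|` Gs| <= 6 * #|` Hs|)%N.
Proof.
move=> _ _ GsP; pose top g := epsilon some_copy (gate_top V Hs g).
have topP g : g \in Gs -> gate_top V Hs g (top g).
  by move/GsP/gate_top_exists; apply: epsilon_spec.
have valid_top g : g \in Gs -> valid_copy V Hs (top g).
  by move/topP => [c0 [v [_ r _ _]]]; apply: (reach_ends r).2.
rewrite -(size_gate_keys V Hs) -(size_map (copy_key \o top)).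
apply: uniq_leq_size.
- rewrite map_inj_in_uniq ?fset_uniq // => g g' gGs g'Gs /= key_eq.
  have top_eq := copy_key_inj (valid_top g gGs) (valid_top g' g'Gs) key_eq.
  by apply: gate_top_inj (topP g gGs) _; rewrite top_eq; apply: topP.
- by move=> _ /mapP [g gGs ->]; apply: gate_top_key (topP g gGs).
Qed.
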